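(* Let $p$ be a prime, let $P > 1$ be a finite abelian $p$-group, and let $G$ be a finite $p'$-group acting faithfully on $P$ via automorphisms. Let $a$ be an integer with $1 \le a \le \log_p(\exp(P))$ and let $\Gamma$ be the set of elements of order $p^a$ in $P$. Then the number $n(G,\Gamma)$ of orbits of $G$ on $\Gamma$ satisfies $n(G,\Gamma) \ge p^{a-1}$.
   Context: A $p'$-group is a finite group whose order is not divisible by $p$. $\exp(P)$ denotes the exponent of $P$. *)

From mathcomp Require Import all_boot all_fingroup all_solvable.
Set Implicit Arguments. Unset Strict Implicit. Unset Printing Implicit Defensive.

Definition num_orbits (aT : finGroupType) (D : {set aT}) (rT : finType)
  (to : action D rT) (G : {set aT}) (Gamma : {set rT}) : nat :=
  #|orbit to G @: Gamma|.

From mathcomp Require Import all_boot all_fingroup all_solvable.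
From mathcomp Require Import pgroup.

Set Implicit Arguments.
Unset Strict Implicit.
Unset Printing Implicit Defensive.

(* Take x in P of order p^a.  The p^(a-1) powers x^(1 + p k), k < p^(a-1),
   all have order p^a and lie in pairwise distinct G-orbits: if
   x^u = (x^v)^g with u = v = 1 (mod p), then iterating g, whose order m is
   prime to p, gives x^(u^m) = x^(v^m), i.e. u^m = v^m (mod p^a); as
   (u^m - v^m)/(u - v) = m v^(m-1) (mod p) is prime to p, u = v (mod p^a). *)

Lemma expn_mod_pexp_inj p a m u v :
  prime p -> ~~ (p %| m) -> ~~ (p %| v) -> u = v %[mod p] ->
  u ^ m = v ^ m %[mod p ^ a] -> u = v %[mod p ^ a].
Proof.
move=> p_pr p'm p'v.
have m_gt0 : 0 < m by case: m p'm; rewrite ?dvdn0.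
wlog le_vu : u v p'v / v <= u.
  move=> IH uv umvm; have [le_vu|/ltnW le_uv] := leqP v u; first exact: IH.
  have p'u : ~~ (p %| u) by rewrite /dvdn uv.
  exact/esym/IH/esym.
move=> uv /eqP; rewrite !eqn_mod_dvd ?leq_exp2r // subn_exp.
set S := \sum_(i < m) _.
have S_mod_p : S = m * v ^ m.-1 %[mod p].
  rewrite -modn_summ (eq_bigr (fun _ => v ^ m.-1 %% p)).
    by rewrite modn_summ sum_nat_const card_ord.
  move=> i _; rewrite -modnMml -modnXm uv modnXm modnMml -expnD subnK //.
  by rewrite -ltnS prednK.
have coprime_S : coprime (p ^ a) S.
  case: a => [|a]; first by rewrite coprime1n.
  rewrite coprime_pexpl // prime_coprime // /dvdn S_mod_p -/(dvdn _ _).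
  by rewrite Euclid_dvdM // Euclid_dvdX // negb_or p'm (negbTE p'v).
by rewrite Gauss_dvdl // -eqn_mod_dvd // => /eqP.
Qed.

Lemma gactX_iter (aT gT : finGroupType) (G : {group aT}) (P : {group gT})
    (to : groupAction G P) x g u v j :
  x \in P -> g \in G -> to (x ^+ u)%g g = (x ^+ v)%g ->
  to (x ^+ (u ^ j))%g (g ^+ j)%g = (x ^+ (v ^ j))%g.
Proof.
move=> Px Gg xug; elim: j => [|j IHj]; first by rewrite expg0 act1.
rewrite expgS actMin ?groupX // expnS expnSr !expgM gactX ?groupX // xug.
by rewrite -[in LHS]expgM (mulnC v) expgM gactX ?groupX // IHj.
Qed.

Lemma pgroup_has_order_pexp (p : nat) (gT : finGroupType) (P : {group gT}) a :
  pgroup p P -> a <= logn p (exponent P) -> exists2 x, x \in P & #[x]%g = p ^ a.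
Proof.
move=> pP le_a_e; have [y Py ey] := exponent_witness (pgroup_nil pP).
have oy : #[y]%g = p ^ logn p (exponent P).
  by rewrite -p_part part_pnat_id // ey; apply: mem_p_elt pP Py.
exists (y ^+ (p ^ (logn p (exponent P) - a)))%g; first by rewrite groupX.
by rewrite (orderXexp _ oy) subKn.
Qed.

Section OrbitsOfPowers.

Variables (p : nat) (aT gT : finGroupType) (G : {group aT}) (P : {group gT}).
Variable to : groupAction G P.
Hypotheses (p_pr : prime p) (p'G : pgroup p^' G).
Variables (x : gT) (a : nat).
Hypotheses (Px : x \in P) (ox : #[x]%g = p ^ a).

Lemma orbit_expg_eq_mod u v :
  ~~ (p %| v) -> u = v %[mod p] ->
  (x ^+ u)%g \in orbit to G (x ^+ v)%g -> u = v %[mod p ^ a].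
Proof.
move=> p'v uv /orbitP[g Gg xvg].
have p'g : ~~ (p %| #[g]%g).
  by rewrite -p'natE //; apply: pnat_dvd (order_dvdG Gg) p'G.
apply: (expn_mod_pexp_inj p_pr p'g p'v uv); rewrite -ox; apply/esym/eqP.
by rewrite -eq_expg_mod_order -(gactX_iter _ Px Gg xvg) expg_order act1.
Qed.

Lemma orbit_expg_1modp_inj :
  0 < a -> injective (fun k : 'I_(p ^ a.-1) => orbit to G (x ^+ (1 + p * k))%g).
Proof.
move=> a_gt0 i j /= Oij.
have r_mod_p k : 1 + p * k = 1 %[mod p] by rewrite addnC mulnC modnMDl.
have r_lt (k : 'I_(p ^ a.-1)) : 1 + p * k < p ^ a.
  have lt_rk : 1 + p * k < p * k.+1 by rewrite mulnS ltn_add2r prime_gt1.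
  have -> : p ^ a = p * p ^ a.-1 by rewrite -expnS prednK.
  by apply: leq_trans lt_rk _; rewrite leq_mul2l ltn_ord orbT.
have p'rj : ~~ (p %| 1 + p * j) by rewrite /dvdn r_mod_p modn_small ?prime_gt1.
have r_ij : 1 + p * i = 1 + p * j %[mod p] by rewrite !r_mod_p.
have := orbit_expg_eq_mod p'rj r_ij; rewrite -Oij orbit_refl => /(_ isT).
rewrite !modn_small ?r_lt // => /addnI /eqP.
by rewrite eqn_pmul2l ?prime_gt0 // => /eqP /val_inj.
Qed.

End OrbitsOfPowers.

Theorem theorem2p4 (p : nat) (aT gT : finGroupType)
  (G : {group aT}) (P : {group gT}) (to : groupAction G P) (a : nat) :
  prime p ->
  abelian P -> pgroup p P -> P :!=: 1%g ->
  pgroup (p^') G ->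
  [faithful G, on P | to] ->
  1 <= a <= logn p (exponent P) ->
  p ^ a.-1 <= num_orbits to G [set x in P | #[x]%g == p ^ a].
Proof.
move=> p_pr _ pP _ p'G _ /andP[a_gt0 le_a_e].
have [x Px ox] := pgroup_has_order_pexp pP le_a_e.
pose O (k : 'I_(p ^ a.-1)) := orbit to G (x ^+ (1 + p * k))%g.
have O_Gamma : O @: setT \subset orbit to G @: [set y in P | #[y]%g == p ^ a].
  apply/subsetP => _ /imsetP[k _ ->]; apply: imset_f.
  have co_rk : coprime (p ^ a) (1 + p * k).
    by rewrite coprime_pexpl // -coprime_modr addnC mulnC modnMDl coprime_modr coprimen1.
  by rewrite inE groupX //= orderXgcd ox (eqP co_rk) divn1.
rewrite /num_orbits; apply: leq_trans (subset_leq_card O_Gamma).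
by rewrite card_imset ?cardsT ?card_ord //; apply: orbit_expg_1modp_inj.
Qed.
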